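(* Let $p>1$, $1/p+1/q=1$, let $\{(x_i,y_i)\}_{i=1}^n\subset\mathbb{R}^d\times\{\pm1\}$ be linearly separable with $\max_i\|x_i\|_q<C$, and let $L(w)=\frac1n\sum_i\ell(y_i\langle w,x_i\rangle)$ with $\ell$ differentiable, decreasing, convex, not attaining its minimum, $\inf\ell=0$. Assume the regularized direction $\bar w^{\mathrm{reg}}_p$ exists. Let $\alpha>0$ and let $r_\alpha$ be such that $L((1+\alpha)\|w\|_p\bar w^{\mathrm{reg}}_p)\le L(w)$ for all $w$ with $\|w\|_p>r_\alpha$. Then for every $w$ with $\|w\|_p>r_\alpha$, $$\langle\nabla L(w),w\rangle\ge(1+\alpha)\|w\|_p\,\langle\nabla L(w),\bar w^{\mathrm{reg}}_p\rangle.$$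
   Context: The regularized direction is $\bar w^{\mathrm{reg}}_p=\lim_{B\to\infty}\bar w_p(B)/B$, where $\bar w_p(B)=\arg\min_{\|w\|_p\le B}L(w)$. *)

From HB Require Import structures.
From mathcomp Require Import all_boot all_order all_algebra.
From mathcomp Require Import all_classical all_reals all_analysis.
Set Implicit Arguments. Unset Strict Implicit. Unset Printing Implicit Defensive.
Import Order.TTheory GRing.Theory Num.Theory.
Import numFieldNormedType.Exports.
Local Open Scope classical_set_scope.
Local Open Scope ring_scope.

Section Defs.
Variable R : realType.

Definition dotv (d : nat) (u v : 'rV[R]_d) : R := \sum_(j < d) u 0 j * v 0 j.

Definition pnorm (d : nat) (p : R) (w : 'rV[R]_d) : R :=
  (\sum_(j < d) `|w 0 j| `^ p) `^ p^-1.

Definition Lemp (d n : nat) (ell : R -> R) (X : 'I_n -> 'rV[R]_d) (Y : 'I_n -> R)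
  (w : 'rV[R]_d) : R :=
  n%:R^-1 * \sum_(i < n) ell (Y i * dotv w (X i)).

Definition gradv (d : nat) (F : 'rV[R]_d -> R) (w : 'rV[R]_d) : 'rV[R]_d :=
  \row_(j < d) derive1 (fun t : R => F (w + t *: delta_mx 0 j)) 0.

Definition linearly_separable (d n : nat) (X : 'I_n -> 'rV[R]_d) (Y : 'I_n -> R) :=
  exists w : 'rV[R]_d, forall i, 0 < Y i * dotv w (X i).

Definition is_constrained_min (d : nat) (p : R) (F : 'rV[R]_d -> R) (B : R)
  (wb : 'rV[R]_d) :=
  pnorm p wb <= B /\ forall v, pnorm p v <= B -> F wb <= F v.

(* wreg is the regularized direction lim_{B->oo} wbar_p(B)/B, for a choice
   wbar_p(B) in argmin_{||w||_p <= B} F(w) *)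
Definition is_reg_direction (d : nat) (p : R) (F : 'rV[R]_d -> R) (wreg : 'rV[R]_d) :=
  exists wbar : R -> 'rV[R]_d,
    (forall B, 0 < B -> is_constrained_min p F B (wbar B)) /\
    (B^-1 *: wbar B) @[B --> +oo] --> wreg.

End Defs.

From HB Require Import structures.
From mathcomp Require Import all_boot all_order all_algebra.
From mathcomp Require Import all_classical all_reals all_analysis.
From mathcomp Require Import ring lra.
Import Order.TTheory GRing.Theory Num.Theory.
Import numFieldNormedType.Exports.
Local Open Scope classical_set_scope.
Local Open Scope ring_scope.

(* The inequality is first-order convexity of L along the segment from w to
   v := (1 + alpha) ||w||_p wreg:  <grad L(w), v - w> <= L(v) - L(w) <= 0,
   the last step being the hypothesis on r_alpha.  Convexity of L is inherited
   from that of ell, since each margin y_i <w, x_i> is linear in w.  The other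
   hypotheses (separability, the l_p/l_q setting, wreg being the regularized
   direction) only serve in the paper to make such an r_alpha exist. *)

Section RealConvexity.
Variable R : realType.

Lemma is_derive_affine_comp (f : R -> R) (a c : R) : derivable f a 1 ->
  is_derive (0 : R) 1 (fun t => f (t * c + a)) (c * derive1 f a).
Proof.
move=> df.
have aff : is_derive (0 : R) 1 (fun t : R => t * c + a) c.
  by apply: is_derive_eq; rewrite scale0r add0r addr0 -[RHS]mulr1.
have dfc : derivable (f \o (fun t => t * c + a)) 0 1.
  apply/derivable1_diffP/differentiable_comp; first exact/derivable1_diffP/ex_derive.
  by rewrite /= mul0r add0r; exact/derivable1_diffP.
apply: DeriveDef dfc _.
rewrite -derive1E derive1_comp.
- by rewrite mul0r add0r mulrC !derive1E (derive_val (is_derive := aff)).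
- exact: ex_derive.
- by rewrite /= mul0r add0r.
Qed.

Variable f : R -> R.
Hypothesis f_convex : forall s t lam, 0 <= lam <= 1 ->
  f (lam * s + (1 - lam) * t) <= lam * f s + (1 - lam) * f t.

Lemma convex_slope_le (a b h : R) : 0 < h <= 1 ->
  h^-1 * (f (h * (b - a) + a) - f a) <= f b - f a.
Proof.
move=> /andP[h_gt0 h_le1]; rewrite ler_pdivrMl //.
have := f_convex b a h; rewrite ltW //= h_le1 => /(_ isT).
have -> : h * b + (1 - h) * a = h * (b - a) + a by ring.
lra.
Qed.

Lemma convex_derive1_le (a b : R) : derivable f a 1 ->
  derive1 f a * (b - a) <= f b - f a.
Proof.
move=> /(@is_derive_affine_comp f a (b - a)) dg.
have /cvg_dnbhs_at_right quot_cvg := ex_derive (is_derive := dg).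
rewrite mulrC -(derive_val (is_derive := dg)) /derive -(cvg_lim _ quot_cvg) //.
apply: limr_le; first exact: cvgP quot_cvg.
near=> h; rewrite /= /shift addr0 mul0r add0r -[h%:A]/(h * 1) mulr1.
apply: convex_slope_le; apply/andP; split; first by near: h; exact: nbhs_right_gt.
by near: h; exact: nbhs_right_le.
Unshelve. all: by end_near.
Qed.

End RealConvexity.

Section DotProduct.
Variables (R : realType) (d : nat).
Implicit Types (u v x : 'rV[R]_d).

Lemma dotvC u v : dotv u v = dotv v u.
Proof. by apply: eq_bigr => j _; rewrite mulrC. Qed.

Lemma dotvDl u v x : dotv (u + v) x = dotv u x + dotv v x.
Proof. by rewrite /dotv -big_split; apply: eq_bigr => j _; rewrite mxE mulrDl. Qed.

Lemma dotvZl (k : R) u x : dotv (k *: u) x = k * dotv u x.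
Proof. by rewrite /dotv mulr_sumr; apply: eq_bigr => j _; rewrite mxE mulrA. Qed.

Lemma dotvZr (k : R) u x : dotv u (k *: x) = k * dotv u x.
Proof. by rewrite dotvC dotvZl dotvC. Qed.

Lemma dotv_delta (j : 'I_d) x : dotv (delta_mx 0 j) x = x 0 j.
Proof.
rewrite /dotv (bigD1 j) //= big1 => [|k /negbTE kj]; last by rewrite mxE kj mul0r.
by rewrite mxE !eqxx mul1r addr0.
Qed.

End DotProduct.

Section EmpiricalLoss.
Context {R : realType} {d n : nat} {ell : R -> R}.
Variables (X : 'I_n -> 'rV[R]_d) (Y : 'I_n -> R).
Hypothesis ell_derivable : forall t, derivable ell t 1.

Lemma gradv_Lemp (w : 'rV[R]_d) : gradv (Lemp ell X Y) w =
  \row_j (n%:R^-1 * \sum_(i < n) Y i * X i 0 j * derive1 ell (Y i * dotv w (X i))).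
Proof.
apply/rowP => j; rewrite !mxE.
have -> : (fun t => Lemp ell X Y (w + t *: delta_mx 0 j)) = n%:R^-1 \*:
    \sum_(i < n) (fun t => ell (t * (Y i * X i 0 j) + Y i * dotv w (X i))).
  apply/funext => t; rewrite /Lemp fct_sumE /=; congr (_ * _).
  apply: eq_bigr => i _; rewrite dotvDl dotvZl dotv_delta; congr ell; ring.
have dL := is_deriveZ n%:R^-1 (is_derive_sum (fun i =>
  @is_derive_affine_comp _ ell (Y i * dotv w (X i)) (Y i * X i 0 j) (ell_derivable _))).
by rewrite derive1E (derive_val (is_derive := dL)).
Qed.

Lemma dotv_gradv_Lemp (w u : 'rV[R]_d) : dotv (gradv (Lemp ell X Y) w) u =
  n%:R^-1 * \sum_(i < n) derive1 ell (Y i * dotv w (X i)) * (Y i * dotv u (X i)).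
Proof.
rewrite gradv_Lemp /dotv.
under eq_bigr do rewrite mxE -mulrA mulr_suml.
rewrite -mulr_sumr exchange_big; congr (_ * _); apply: eq_bigr => i _.
rewrite !mulr_sumr; apply: eq_bigr => j _; ring.
Qed.

Hypothesis ell_convex : forall s t lam, 0 <= lam <= 1 ->
  ell (lam * s + (1 - lam) * t) <= lam * ell s + (1 - lam) * ell t.

Lemma Lemp_gradv_le (v w : 'rV[R]_d) :
  dotv (gradv (Lemp ell X Y) w) v - dotv (gradv (Lemp ell X Y) w) w
    <= Lemp ell X Y v - Lemp ell X Y w.
Proof.
rewrite !dotv_gradv_Lemp /Lemp -!mulrBr ler_wpM2l ?invr_ge0 ?ler0n //.
rewrite -!sumrB; apply: ler_sum => i _; rewrite -mulrBr.
exact: convex_derive1_le.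
Qed.

End EmpiricalLoss.

Theorem corollary1 (R : realType) (d n : nat) (p q C : R)
  (X : 'I_n -> 'rV[R]_d) (Y : 'I_n -> R) (ell : R -> R) (wreg : 'rV[R]_d)
  (alpha r_alpha : R) :
  1 < p -> p^-1 + q^-1 = 1 ->
  (forall i, Y i = 1 \/ Y i = -1) ->
  linearly_separable X Y ->
  (forall i, pnorm q (X i) < C) ->
  (forall t, derivable ell t 1) ->
  (forall s t, s < t -> ell t < ell s) ->
  (forall s t lam, 0 <= lam <= 1 ->
     ell (lam * s + (1 - lam) * t) <= lam * ell s + (1 - lam) * ell t) ->
  (forall t, exists s, ell s < ell t) ->
  (forall t, 0 <= ell t) -> (forall e, 0 < e -> exists t, ell t < e) ->
  is_reg_direction p (Lemp ell X Y) wreg ->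
  0 < alpha ->
  (forall w, r_alpha < pnorm p w ->
     Lemp ell X Y (((1 + alpha) * pnorm p w) *: wreg) <= Lemp ell X Y w) ->
  forall w, r_alpha < pnorm p w ->
    (1 + alpha) * pnorm p w * dotv (gradv (Lemp ell X Y) w) wreg
      <= dotv (gradv (Lemp ell X Y) w) w.
Proof.
move=> _ _ _ _ _ ell_derivable _ ell_convex _ _ _ _ _ r_alpha_min w w_large.
set v := ((1 + alpha) * pnorm p w) *: wreg.
have descent : Lemp ell X Y v - Lemp ell X Y w <= 0.
  by rewrite subr_le0; exact: r_alpha_min.
rewrite -subr_le0 -dotvZr.
exact: le_trans (Lemp_gradv_le X Y ell_derivable ell_convex v w) descent.
Qed.
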